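(* Let $G$ be a graph on $n$ vertices with at least one edge that is both vertex-transitive and edge-transitive, and let $\lambda_1(G)$ and $\lambda_n(G)$ be the largest and smallest eigenvalues of its adjacency matrix. Then $\chi_v(G)=1-\frac{\lambda_1(G)}{\lambda_n(G)}=\chi_{sv}(G)$.
   Context: Graphs are finite, simple, undirected. Vertex-/edge-transitive means the automorphism group acts transitively on vertices/edges. For a graph on $n$ vertices with at least one edge, a vector $t$-coloring ($t\ge2$) assigns unit vectors $u_i\in\mathbb R^n$ to vertices with $u_i^{\mathrm T}u_j\le-\frac1{t-1}$ for every edge $\{i,j\}$, and a strict vector $t$-coloring requires equality on every edge; $\chi_v$ and $\chi_{sv}$ are the smallest $t\ge2$ admitting a vector, resp. strict vector, $t$-coloring. *)

From mathcomp Require Import all_boot all_order all_algebra all_fingroup.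
From mathcomp Require Import reals.
Set Implicit Arguments. Unset Strict Implicit. Unset Printing Implicit Defensive.
Import Order.TTheory GRing.Theory Num.Theory.
Local Open Scope ring_scope.

Definition simple_graph (n : nat) (e : rel 'I_n) : Prop :=
  (forall x y, e x y = e y x) /\ (forall x, ~~ e x x).

Definition has_edge (n : nat) (e : rel 'I_n) : Prop := exists x y, e x y.

Definition is_aut (n : nat) (e : rel 'I_n) (s : {perm 'I_n}) : Prop :=
  forall x y, e (s x) (s y) = e x y.

Definition vertex_transitive (n : nat) (e : rel 'I_n) : Prop :=
  forall x y, exists s, is_aut e s /\ s x = y.

Definition edge_transitive (n : nat) (e : rel 'I_n) : Prop :=
  forall x y x' y', e x y -> e x' y' ->
    exists s, is_aut e s /\ [set s x; s y] = [set x'; y'].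

Definition adjmx (R : realType) (n : nat) (e : rel 'I_n) : 'M[R]_n :=
  \matrix_(i, j) (e i j)%:R.

Definition largest_eigenvalue (R : realType) (n : nat) (A : 'M[R]_n) (l : R) :=
  eigenvalue A l /\ forall m, eigenvalue A m -> m <= l.

Definition smallest_eigenvalue (R : realType) (n : nat) (A : 'M[R]_n) (l : R) :=
  eigenvalue A l /\ forall m, eigenvalue A m -> l <= m.

Definition dotv (R : realType) (n : nat) (u v : 'rV[R]_n) : R := (u *m v^T) 0 0.

Definition vector_coloring (R : realType) (n : nat) (e : rel 'I_n) (t : R) : Prop :=
  exists u : 'I_n -> 'rV[R]_n,
    (forall i, dotv (u i) (u i) = 1) /\
    (forall i j, e i j -> dotv (u i) (u j) <= - (t - 1)^-1).

Definition strict_vector_coloring (R : realType) (n : nat) (e : rel 'I_n) (t : R) : Prop :=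
  exists u : 'I_n -> 'rV[R]_n,
    (forall i, dotv (u i) (u i) = 1) /\
    (forall i j, e i j -> dotv (u i) (u j) = - (t - 1)^-1).

Definition is_least_coloring_number (R : realType) (P : R -> Prop) (t : R) : Prop :=
  2 <= t /\ P t /\ forall s, 2 <= s -> P s -> t <= s.

Definition is_chi_v (R : realType) (n : nat) (e : rel 'I_n) (t : R) : Prop :=
  is_least_coloring_number (vector_coloring e) t.

Definition is_chi_sv (R : realType) (n : nat) (e : rel 'I_n) (t : R) : Prop :=
  is_least_coloring_number (strict_vector_coloring e) t.

From mathcomp Require Import all_boot all_order all_algebra all_fingroup.
From mathcomp Require Import reals complex lra ring.
Set Implicit Arguments. Unset Strict Implicit. Unset Printing Implicit Defensive.
Import Order.TTheory GRing.Theory Num.Theory.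
Local Open Scope ring_scope.
Local Open Scope sesquilinear_scope.

(* Let d be the degree of the (regular) graph.  The all-ones vector gives
   l1 = d.  If u is a vector t-colouring, summing the Rayleigh bound
   x A x^T >= ln x x^T over the coordinates of the u_i gives
   n ln <= sum_ij A_ij <u_i, u_j> <= - n d / (t - 1), i.e. t >= 1 - d / ln.
   Conversely, averaging the outer product of an ln-eigenvector over the
   automorphism group gives an invariant matrix M with A M = ln M.  The Gram
   matrix of the rows of M is then constant on the diagonal by vertex
   transitivity and constant on edges by edge transitivity, and the ratio of
   the two constants is ln / d = - 1 / (t - 1) for t = 1 - d / ln: the
   normalised rows form a strict vector t-colouring. *)

Section Spectral.
Variables (C : numClosedFieldType) (n : nat).
Implicit Types (A : 'M[C]_n) (x : 'rV[C]_n).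

Lemma spectral_diag_eigenvalue A k :
  A \is normalmx -> eigenvalue A (spectral_diag A 0 k).
Proof.
move=> /orthomx_spectralP A_eq; have PU := spectral_unitarymx A.
set P := spectralmx A in A_eq PU *.
apply/eigenvalueP; exists (row k P).
  rewrite [in LHS]A_eq invmx_unitary // !mulmxA -!row_mul (unitarymxP PU).
  by rewrite mul1mx row_mul row_diag_mx -scalemxAl -rowE.
rewrite rowE mulmx_free_eq0 ?row_free_unit ?spectral_unit //.
by apply/eqP => /matrixP/(_ 0 k)/eqP; rewrite !mxE !eqxx oner_eq0.
Qed.

Lemma hermitian_quadform_ge A l : A \is hermsymmx ->
    {in Num.real, forall m, eigenvalue A m -> l <= m} ->
  forall x, l * (x *m x ^t*) 0 0 <= (x *m A *m x ^t*) 0 0.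
Proof.
move=> hermA le_l x; have normA := hermitian_normalmx hermA.
have /orthomx_spectralP A_eq := normA; have PU := spectral_unitarymx A.
set P := spectralmx A in A_eq PU *; set D := spectral_diag A in A_eq.
rewrite invmx_unitary // in A_eq.
set w := x *m P ^t*.
have wC : w ^t* = P *m x ^t* by rewrite trmx_mul map_mxM trmxCK.
have PCP : P ^t* *m P = 1%:M by apply/mulmx1C/unitarymxP.
have -> : x *m x ^t* = w *m w ^t* by rewrite wC mulmxA -(mulmxA x) PCP mulmx1.
rewrite A_eq !mulmxA -/w -(mulmxA _ P) -wC mul_mx_diag; clearbody w.
rewrite !mxE mulr_sumr; apply: ler_sum => k _.
rewrite !mxE mulrAC -normCK mulrC.
apply: ler_wpM2l; first exact: exprn_ge0.
apply: le_l; last exact: spectral_diag_eigenvalue.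
by move/mxOverP: (hermitian_spectral_diag_real hermA); apply.
Qed.
End Spectral.

(* The spectral theorem is available over numClosedFieldType only, so the
   real bound is obtained in R[i]. *)
Lemma symmetric_quadform_ge (R : rcfType) n (A : 'M[R]_n) l : A^T = A ->
    (forall m, eigenvalue A m -> l <= m) ->
  forall x : 'rV[R]_n, l * (x *m x^T) 0 0 <= (x *m A *m x^T) 0 0.
Proof.
move=> symA le_l x; pose f := real_complex R.
have fC m p (M : 'M[R]_(m, p)) : (map_mx f M) ^t* = map_mx f M^T.
  by apply/matrixP => i j; rewrite !mxE conj_Creal // complex_real.
have fE m p (M : 'M[R]_(m, p)) i j : map_mx f M i j = f (M i j) by rewrite mxE.
have hermAf : map_mx f A \is hermsymmx.
  apply: realsym_hermsym.
    by apply/is_hermitianmxP; rewrite expr0 scale1r map_mx_id // map_trmx symA.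
  by apply/mxOverP => i j; rewrite mxE complex_real.
have le_lf : {in Num.real, forall m, eigenvalue (map_mx f A) m -> f l <= m}.
  by move=> m /RRe_real <-; rewrite eigenvalue_map lecR; apply: le_l.
have := hermitian_quadform_ge hermAf le_lf (map_mx f x).
by rewrite fC -!map_mxM !fE -rmorphM lecR.
Qed.

Lemma dotvE (R : realType) p (u v : 'rV[R]_p) : dotv u v = \sum_k u 0 k * v 0 k.
Proof. by rewrite /dotv mxE; apply: eq_bigr => k _; rewrite mxE. Qed.

Lemma dotvZ (R : realType) p c (u v : 'rV[R]_p) :
  dotv (c *: u) (c *: v) = c ^+ 2 * dotv u v.
Proof.
rewrite !dotvE mulr_sumr; apply: eq_bigr => k _; rewrite !mxE.
by rewrite mulrACA -expr2.
Qed.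

Lemma dotv_row (R : realType) m p (M : 'M[R]_(m, p)) i j :
  dotv (row i M) (row j M) = (M *m M^T) i j.
Proof. by rewrite dotvE mxE; apply: eq_bigr => k _; rewrite !mxE. Qed.

Lemma gram_sym (R : realType) m p (M : 'M[R]_(m, p)) i j :
  (M *m M^T) i j = (M *m M^T) j i.
Proof. by rewrite -!dotv_row !dotvE; apply: eq_bigr => k _; rewrite mulrC. Qed.

Lemma gram_diag_ge (R : realType) n (M : 'M[R]_n) i :
  M i i ^+ 2 <= (M *m M^T) i i.
Proof.
rewrite mxE (bigD1 i) //= mxE -expr2 lerDl.
by apply: sumr_ge0 => k _; rewrite mxE -expr2 sqr_ge0.
Qed.

Lemma symmetric_gram_ge (R : realType) n p (A : 'M[R]_n) l : A^T = A ->
    (forall m, eigenvalue A m -> l <= m) ->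
  forall u : 'I_n -> 'rV[R]_p,
  l * \sum_i dotv (u i) (u i) <= \sum_i \sum_j A i j * dotv (u i) (u j).
Proof.
move=> symA le_l u; pose x k : 'rV[R]_n := \row_i u i 0 k.
have xxE : \sum_i dotv (u i) (u i) = \sum_k (x k *m (x k)^T) 0 0.
  under eq_bigr do rewrite dotvE; rewrite exchange_big.
  by apply: eq_bigr => k _; rewrite mxE; apply: eq_bigr => i _; rewrite !mxE.
have xAxE : \sum_i \sum_j A i j * dotv (u i) (u j) =
            \sum_k (x k *m A *m (x k)^T) 0 0.
  under eq_bigr do under eq_bigr do rewrite dotvE mulr_sumr.
  under eq_bigr do rewrite exchange_big.
  rewrite exchange_big; apply: eq_bigr => k _; rewrite mxE exchange_big.
  apply: eq_bigr => j _; rewrite !mxE mulr_suml; apply: eq_bigr => i _.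
  by rewrite !mxE mulrCA mulrA.
rewrite xxE xAxE mulr_sumr; apply: ler_sum => k _.
exact: symmetric_quadform_ge.
Qed.

Section Graph.
Variables (R : realType) (n : nat) (e : rel 'I_n).
Hypothesis e_sym : forall x y, e x y = e y x.
Local Notation A := (adjmx R e).

Lemma adjmx_sym i j : A i j = A j i.
Proof. by rewrite !mxE e_sym. Qed.

Lemma adjmx_tr : A^T = A.
Proof. by apply/matrixP => i j; rewrite mxE adjmx_sym. Qed.

Lemma adjmx_ge0 i j : 0 <= A i j.
Proof. by rewrite mxE ler0n. Qed.

Definition deg i : R := \sum_j A i j.

Lemma deg_ge1 a b : e a b -> 1 <= deg a.
Proof.
move=> eab; rewrite /deg (bigD1 b) //= mxE eab lerDl.
by apply: sumr_ge0 => j _; apply: adjmx_ge0.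
Qed.

Lemma deg_aut s i : is_aut e s -> deg (s i) = deg i.
Proof.
move=> auts; rewrite /deg (reindex_inj (@perm_inj _ s)) /=.
by apply: eq_bigr => j _; rewrite !mxE auts.
Qed.

Lemma vertex_transitive_regular :
  vertex_transitive e -> forall i j, deg i = deg j.
Proof. by move=> vt i j; have [s [auts <-]] := vt j i; rewrite deg_aut. Qed.

Lemma min_eigenvalue_le_N1 l a b : (forall x, ~~ e x x) ->
  (forall m, eigenvalue A m -> l <= m) -> e a b -> l <= -1.
Proof.
move=> e_irr le_l eab; have ab : a != b by apply: contraTneq eab => ->.
set x : 'rV[R]_n := delta_mx 0 a - delta_mx 0 b.
have xT_col (y : 'rV[R]_n) : (y *m x^T) 0 0 = y 0 a - y 0 b.
  by rewrite linearB /= !trmx_delta mulmxBr -!colE !mxE.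
have := symmetric_quadform_ge adjmx_tr le_l x.
rewrite !xT_col mulmxBl -!rowE !mxE !eqxx (negbTE ab) eq_sym (negbTE ab).
rewrite eab e_sym eab (negbTE (e_irr a)) (negbTE (e_irr b)) /=.
lra.
Qed.

Section Regular.
Hypothesis regular : forall i j, deg i = deg j.

Lemma eigenvalue_deg i : eigenvalue A (deg i).
Proof.
apply/eigenvalueP; exists (const_mx 1); last first.
  by apply/eqP => /rowP/(_ i)/eqP; rewrite !mxE oner_eq0.
apply/rowP => k; rewrite !mxE (regular i k) mulr1 /deg.
by apply: eq_bigr => j _; rewrite mxE mul1r adjmx_sym.
Qed.

Lemma norm_eigenvalue_le_deg m i : eigenvalue A m -> `|m| <= deg i.
Proof.
case/eigenvalueP => v hv v0.
have [k _ v_max] := @arg_maxP _ _ _ i xpredT (fun j => `|v 0 j|) isT.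
have vk_gt0 : 0 < `|v 0 k|.
  rewrite normr_gt0; apply: contra v0 => /eqP vk0; apply/eqP/rowP => j.
  have := v_max j isT; rewrite /= vk0 normr0 mxE => vj_le0.
  by apply/normr0_eq0/le_anti; rewrite vj_le0 normr_ge0.
rewrite -(ler_pM2r vk_gt0) (regular i k) -normrM.
have -> : m * v 0 k = \sum_j v 0 j * A j k.
  by have /rowP/(_ k) := hv; rewrite !mxE => <-.
rewrite /deg mulr_suml; apply: le_trans (ler_norm_sum _ _ _) _.
apply: ler_sum => j _; rewrite normrM (ger0_norm (adjmx_ge0 _ _)) mulrC.
by rewrite adjmx_sym; apply: ler_wpM2l; [exact: adjmx_ge0 | exact: v_max].
Qed.

Lemma vector_coloring_ge l s a b : (forall m, eigenvalue A m -> l <= m) ->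
  l < 0 -> e a b -> 1 < s -> vector_coloring e s -> 1 - deg a / l <= s.
Proof.
move=> le_l l_lt0 eab s_gt1 [u [u_unit u_edge]].
have n_gt0 : (0 < n)%N := leq_trans (ltn0Sn a) (ltn_ord a).
have := symmetric_gram_ge adjmx_tr le_l u.
under eq_bigr do rewrite u_unit.
have edge_sum : \sum_i \sum_j A i j * dotv (u i) (u j) <=
                \sum_i deg i * - (s - 1)^-1.
  apply: ler_sum => i _; rewrite /deg mulr_suml; apply: ler_sum => j _.
  by rewrite mxE; case: (boolP (e i j)) => eij; rewrite ?mul1r ?u_edge ?mul0r.
move=> /le_trans /(_ edge_sum).
under [X in _ <= X]eq_bigr => i _ do rewrite (regular i a).
rewrite !sumr_const card_ord mulr_natr ler_pMn2r // mulrN -mulNr.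
rewrite ler_pdivlMr ?subr_gt0 // => l_le.
have dE : deg a = deg a / l * l by rewrite divfK ?lt_eqF.
rewrite {1}dE in l_le; nra.
Qed.
End Regular.
End Graph.

Section Automorphisms.
Variables (R : realType) (n : nat) (e : rel 'I_n).
Hypothesis e_sym : forall x y, e x y = e y x.
Local Notation A := (adjmx R e).

Definition autb (s : {perm 'I_n}) :=
  [forall x, [forall y, e (s x) (s y) == e x y]].

Lemma autbP s : reflect (is_aut e s) (autb s).
Proof.
apply: (iffP forallP) => [auts x y | auts x].
  by apply/eqP; move: y; apply/forallP.
by apply/forallP => y; rewrite auts.
Qed.

Lemma autbM t s : autb t -> autb (t * s)%g = autb s.
Proof.
move=> /autbP autt; apply/autbP/autbP => auts x y.
  have := auts ((t^-1)%g x) ((t^-1)%g y); rewrite !permM !permKV => ->.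
  by rewrite -autt !permKV.
by rewrite !permM auts autt.
Qed.

Definition aut_invariant (M : 'M[R]_n) :=
  forall s, is_aut e s -> forall i j, M (s i) (s j) = M i j.

Lemma aut_invariant_gram M : aut_invariant M -> aut_invariant (M *m M^T).
Proof.
move=> invM s auts i j; rewrite !mxE (reindex_inj (@perm_inj _ s)) /=.
by apply: eq_bigr => k _; rewrite !mxE !invM.
Qed.

Definition orbit_gram (v : 'rV[R]_n) : 'M[R]_n :=
  \matrix_(i, j) \sum_(s | autb s) v 0 (s i) * v 0 (s j).

Lemma orbit_gram_aut_invariant (v : 'rV[R]_n) : aut_invariant (orbit_gram v).
Proof.
move=> t /autbP autt i j; rewrite !mxE [RHS](reindex_inj (mulgI t)) /=.
by apply: eq_big => [s | s _]; rewrite ?autbM // !permM.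
Qed.

Lemma orbit_gram_diag_ge (v : 'rV[R]_n) i : v 0 i ^+ 2 <= orbit_gram v i i.
Proof.
rewrite mxE (bigD1 1%g) /=; last by apply/autbP => x y; rewrite !perm1.
by rewrite perm1 -expr2 lerDl; apply: sumr_ge0 => s _; rewrite -expr2 sqr_ge0.
Qed.

Lemma orbit_gram_eigen l (v : 'rV[R]_n) :
  v *m A = l *: v -> A *m orbit_gram v = l *: orbit_gram v.
Proof.
move=> eigv; apply/matrixP => i k; rewrite /orbit_gram !mxE.
under eq_bigr do rewrite [X in _ * X]mxE mulr_sumr.
rewrite exchange_big mulr_sumr; apply: eq_bigr => s /autbP auts.
transitivity (v 0 (s k) * \sum_j v 0 j * A j (s i)).
  rewrite mulr_sumr [RHS](reindex_inj (@perm_inj _ s)) /=.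
  apply: eq_bigr => j _.
  by rewrite !mxE auts e_sym; ring.
by have /rowP/(_ (s i)) := eigv; rewrite !mxE => ->; ring.
Qed.

Section Transitive.
Variable G : 'M[R]_n.
Hypothesis G_inv : aut_invariant G.

Lemma aut_invariant_diag : vertex_transitive e -> forall i j, G i i = G j j.
Proof. by move=> vt i j; have [s [auts <-]] := vt j i; rewrite G_inv. Qed.

Hypothesis G_sym : forall i j, G i j = G j i.

Lemma aut_invariant_edge : (forall x, ~~ e x x) -> edge_transitive e ->
  forall i j a b, e i j -> e a b -> G i j = G a b.
Proof.
move=> e_irr et i j a b eij eab; have [s [auts sij]] := et i j a b eij eab.
have : a != b by apply: contraTneq eab => ->; apply: e_irr.
have /set2P[-> | ->] : a \in [set s i; s j] by rewrite sij set21.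
all: have /set2P[-> | ->] : b \in [set s i; s j] by rewrite sij set22.
all: rewrite ?eqxx // => _; rewrite G_inv // G_sym.
Qed.

Lemma aut_invariant_eigen_edge l a b :
    (forall x, ~~ e x x) -> edge_transitive e ->
  A *m G = l *: G -> e a b -> deg R e a * G a b = l * G a a.
Proof.
move=> e_irr et eigG eab; have /matrixP/(_ a a) := eigG; rewrite !mxE => <-.
rewrite /deg mulr_suml; apply: eq_bigr => j _; rewrite mxE.
case: (boolP (e a j)) => eaj; rewrite ?mul0r // !mul1r.
by rewrite (G_sym j a) (aut_invariant_edge e_irr et eaj eab).
Qed.

End Transitive.

Lemma eigenvector_strict_coloring l (v : 'rV[R]_n) a b :
    (forall x, ~~ e x x) -> vertex_transitive e -> edge_transitive e ->
    v *m A = l *: v -> v != 0 -> e a b ->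
  exists u : 'I_n -> 'rV[R]_n, (forall i, dotv (u i) (u i) = 1) /\
    (forall i j, e i j -> dotv (u i) (u j) = l / deg R e a).
Proof.
move=> e_irr vt et eigv v_neq0 eab.
have [i0 vi0_neq0] : exists i0, v 0 i0 != 0.
  apply/existsP; apply: contraR v_neq0 => /existsPn v0.
  by apply/eqP/rowP => i; rewrite mxE; apply/eqP/negbNE.
(* M is positive semidefinite, but its rows provide explicit vectors of
   R^n, with Gram matrix M M^T. *)
set M := orbit_gram v; set G := M *m M^T.
have G_inv : aut_invariant G := aut_invariant_gram (orbit_gram_aut_invariant v).
have G_sym := gram_sym M.
have eigG : A *m G = l *: G.
  by rewrite mulmxA (orbit_gram_eigen eigv) -scalemxAl.
have Gaa_gt0 : 0 < G a a.
  rewrite (aut_invariant_diag G_inv vt a i0).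
  have vi0_gt0 : 0 < v 0 i0 ^+ 2 by rewrite exprn_even_gt0.
  apply: lt_le_trans (gram_diag_ge M i0).
  by rewrite exprn_gt0 // (lt_le_trans vi0_gt0 (orbit_gram_diag_ge v i0)).
have deg_gt0 : 0 < deg R e a := lt_le_trans ltr01 (deg_ge1 R eab).
have GabE : G a b = l * G a a / deg R e a.
  rewrite -(aut_invariant_eigen_edge G_inv G_sym e_irr et eigG eab).
  by rewrite [_ * G a b]mulrC mulfK ?gt_eqF.
exists (fun i => (Num.sqrt (G a a))^-1 *: row i M).
have dotu i j : dotv ((Num.sqrt (G a a))^-1 *: row i M)
                     ((Num.sqrt (G a a))^-1 *: row j M) = G i j / G a a.
  by rewrite dotvZ dotv_row exprVn sqr_sqrtr ?ltW // mulrC.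
split => [i | i j eij]; rewrite dotu.
  by rewrite (aut_invariant_diag G_inv vt i a) divff ?gt_eqF.
rewrite (aut_invariant_edge G_inv G_sym e_irr et eij eab) GabE.
by rewrite mulrAC mulfK ?gt_eqF.
Qed.

End Automorphisms.

Lemma strict_vector_coloringW (R : realType) n (e : rel 'I_n) (t : R) :
  strict_vector_coloring e t -> vector_coloring e t.
Proof. by case=> u [u_unit u_edge]; exists u; split=> // i j /u_edge ->. Qed.

Theorem mainTheorem12 (R : realType) (n : nat) (e : rel 'I_n) (l1 ln : R) :
  simple_graph e -> has_edge e ->
  vertex_transitive e -> edge_transitive e ->
  largest_eigenvalue (adjmx R e) l1 ->
  smallest_eigenvalue (adjmx R e) ln ->
  is_chi_v e (1 - l1 / ln) /\ is_chi_sv e (1 - l1 / ln).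
Proof.
move=> [e_sym e_irr] [a [b eab]] vt et [eig_l1 le_l1] [eig_ln ge_ln].
have regular := vertex_transitive_regular R vt.
set d := deg R e a.
have l1E : l1 = d.
  apply: le_anti; rewrite le_l1 ?eigenvalue_deg // andbT.
  exact: le_trans (ler_norm _) (norm_eigenvalue_le_deg e_sym regular a eig_l1).
have ln_le : ln <= -1 := min_eigenvalue_le_N1 e_sym e_irr ge_ln eab.
have d_ge : - d <= ln.
  have := norm_eigenvalue_le_deg e_sym regular a eig_ln.
  by rewrite ler_norml => /andP[].
have t_ge2 : 2 <= 1 - d / ln.
  suff : d / ln <= -1 by lra.
  by rewrite ler_ndivrMr; lra.
have tE : - ((1 - d / ln) - 1)^-1 = ln / d.
  by rewrite addrAC subrr add0r invrN opprK invf_div.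
have [v eigv v_neq0] := eigenvalueP eig_ln.
have [u [u_unit u_edge]] :=
  eigenvector_strict_coloring e_sym e_irr vt et eigv v_neq0 eab.
have strict : strict_vector_coloring e (1 - d / ln).
  by exists u; split => // i j eij; rewrite tE u_edge.
have least s : 2 <= s -> vector_coloring e s -> 1 - d / ln <= s.
  by move=> s_ge2; apply: (vector_coloring_ge e_sym regular ge_ln) eab _; lra.
rewrite l1E; split; (split; [exact: t_ge2 | split]).
- exact: strict_vector_coloringW.
- exact: least.
- exact: strict.
- by move=> s s_ge2 /strict_vector_coloringW; apply: least.
Qed.
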